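(* Let $n\ge 5$, $q$ odd, and let $G$ be an almost simple primitive permutation group with socle $G_0=\mathrm{P\Omega}^{\epsilon}_n(q)$ (with $\epsilon$ absent if $n$ is odd) acting on a $G$-orbit $X$ of non-degenerate $1$-dimensional subspaces of the natural module $V_n(q)$. Then $\mathrm{diam}(X,G)=2$.
   Context: $V_n(q)$ carries a non-degenerate quadratic form $Q$ with associated bilinear form $f$; a $1$-space $\langle v\rangle$ is non-degenerate iff $Q(v)\neq 0$. An (undirected) orbital graph of $(X,G)$ is a graph on $X$ whose edge set is a single $G$-orbit on unordered $2$-subsets of $X$, and $\mathrm{diam}(X,G)$ is the maximum diameter of all such orbital graphs. *)

From HB Require Import structures.
From mathcomp Require Import all_boot all_order all_algebra all_fingroup all_solvable.
Set Implicit Arguments. Unset Strict Implicit. Unset Printing Implicit Defensive.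
Import GRing.Theory.
Local Open Scope ring_scope.

Section Orth.
Variables (F : finFieldType) (n : nat).

Definition qform (A : 'M[F]_n) (v : 'rV[F]_n) : F := (v *m A *m v^T) 0 0.

Definition line (v : 'rV[F]_n) : {set 'rV[F]_n} := [set c *: v | c : F].

Definition is_point (S : {set 'rV[F]_n}) : bool :=
  [exists v : 'rV[F]_n, (v != 0) && (S == line v)].

Definition point := {S : {set 'rV[F]_n} | is_point S}.

Definition nondeg_point (A : 'M[F]_n) (x : point) : bool :=
  [exists v : 'rV[F]_n, [&& v != 0, val x == line v & qform A v != 0]].

Definition semilin_image (s : F -> F) (M : 'M[F]_n) (S : {set 'rV[F]_n}) :=
  [set map_mx s v *m M | v in S].

Definition induced_by_semisim (A : 'M[F]_n) (p : {perm point}) : Prop :=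
  exists (s : {rmorphism F -> F}) (M : 'M[F]_n) (lam : F),
    [/\ M \in unitmx, lam != 0,
        forall v, qform A (map_mx s v *m M) = lam * s (qform A v)
      & forall x : point, val (p x) = semilin_image s M (val x)].

Definition PO (A : 'M[F]_n) : {set {perm point}} :=
  [set p : {perm point} | [exists M : 'M[F]_n,
     [&& M \in unitmx, [forall v, qform A (v *m M) == qform A v] &
         [forall x : point, val (p x) == semilin_image id M (val x)]]]].

(* POmega(V,Q) = image of Omega(V,Q) = O(V,Q)' on the points. *)
Definition POmega (A : 'M[F]_n) : {set {perm point}} := ([~: PO A, PO A])%g.

Definition orbital_rel (G : {set {perm point}}) (x y : point) : rel point :=
  fun u w => [exists g in G,
    ((u == g x) && (w == g y)) || ((u == g y) && (w == g x))].

Definition within_dist (E : rel point) (X : {set point}) (k : nat) (u w : point) :=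
  exists s : seq point, [/\ all (mem X) s, path E u s, last u s = w & (size s <= k)%N].

Definition graph_diam_le (E : rel point) (X : {set point}) (k : nat) :=
  forall u w, u \in X -> w \in X -> within_dist E X k u w.

(* diam(X,G) = d (d >= 1): every orbital graph has diameter <= d and some
   orbital graph has diameter > d-1, i.e. the maximum diameter is d. *)
Definition orbital_diam_eq (G : {set {perm point}}) (X : {set point}) (d : nat) :=
  (forall x y, x \in X -> y \in X -> x != y -> graph_diam_le (orbital_rel G x y) X d)
  /\ (exists x y, [/\ x \in X, y \in X, x != y &
                    ~ graph_diam_le (orbital_rel G x y) X d.-1]).

End Orth.

From HB Require Import structures.
From mathcomp Require Import all_boot all_order all_algebra all_fingroup all_solvable all_field.
From mathcomp Require Import ring.
Set Implicit Arguments. Unset Strict Implicit. Unset Printing Implicit Defensive.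
Import GRing.Theory.
Local Open Scope ring_scope.

(* Write '[u, v] for the bilinear form of A, and let x0 = <v0>. A product r_a r_b of
   reflections in vectors of the same non-zero norm is a commutator of two reflections,
   hence lies in Omega. For n >= 5 the form represents every scalar on the orthogonal
   complement of any two vectors (counting squares does it on non-degenerate planes), so a
   reflection can always be completed, by a second one fixing the relevant vectors, to an
   element of Omega. This gives Witt-type transitivity: Omega is transitive on vectors of a
   given non-zero norm, and the stabiliser of an anisotropic v is transitive on vectors
   outside <v> with prescribed norm and inner product with v. Hence G maps {x, y} to {p, z} whenever
   suitable representatives satisfy '[p, z] = +-'[x, y], and X contains every point <u>
   with '[u] = '[v0]; primitivity gives equality, as this set of points is preserved by the
   stabiliser of x0 and by an element of Omega moving x0. Any two points <u>, <w> of X then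
   have a common neighbour <d>, where '[d] = '[v0], '[u, d] = '[x, y] and
   '[w, d] = +-'[x, y], so every orbital graph has diameter at most 2. Semisimilarities
   preserve orthogonality, so the orbital graph of a perpendicular pair does not join x0 to
   <v0 + t> for t isotropic and orthogonal to v0: the diameter is exactly 2. *)

Lemma addr_mul_neq0 (F : fieldType) (x1 x2 t : F) :
  (x1 != 0) || (x2 != 0) -> t != - x1 / x2 -> x1 + t * x2 != 0.
Proof.
have [->|nz_x2 _] := eqVneq x2 0; first by rewrite mulr0 addr0 orbF.
by apply: contra => /eqP/addr0_eq sum0; rewrite sum0 mulfK.
Qed.

Section OddFiniteField.
Variable F : finFieldType.
Hypothesis oddF : odd #|F|.

Lemma two_neq0 : (2 : F) != 0.
Proof.
apply/negP => /eqP two0.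
have char2 : 2%N \in [pchar F] by rewrite inE /= two0 eqxx.
have := order_dvdG (in_setT (1 : pPrimeCharType char2)).
by rewrite order_pprimeChar ?oner_neq0 // cardsT dvdn2 oddF.
Qed.

Lemma card_sqr_gt : (#|F| < 2 * #|[set a ^+ 2 | a : F]|)%N.
Proof.
pose rt (s : F) := odflt 0 [pick b | b ^+ 2 == s].
have rtE a : (rt (a ^+ 2) == a) || (rt (a ^+ 2) == - a).
  rewrite -eqf_sqr; apply/eqP.
  by rewrite /rt; case: pickP => [b /eqP //|/(_ a)]; rewrite eqxx.
pose f a := (a ^+ 2, a == rt (a ^+ 2)).
have inj_f : injective f.
  move=> a b [sq_ab]; rewrite sq_ab => eq_rt.
  have /orP [/eqP //|/eqP ab] : (a == b) || (a == - b) by rewrite -eqf_sqr sq_ab.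
  move: eq_rt; rewrite ab; case/orP: (rtE b) => /eqP ->; rewrite eqxx.
    by move/eqP.
  by move/esym/eqP.
have sub_f : [set f a | a : F] \subset setX [set a ^+ 2 | a : F] [set: bool].
  apply/subsetP => _ /imsetP [a _ ->]; rewrite inE /= in_setT andbT.
  by apply/imsetP; exists a.
have := subset_leq_card sub_f; rewrite card_imset // cardsX !cardsT card_bool.
rewrite muln2 -mul2n leq_eqVlt => /orP [/eqP eqF|//].
by move: oddF; rewrite eqF oddM.
Qed.

Lemma sum_two_squares (c1 c2 e : F) : c1 != 0 -> c2 != 0 ->
  exists a b : F, c1 * a ^+ 2 + c2 * b ^+ 2 = e.
Proof.
move=> nz_c1 nz_c2; pose S := [set a ^+ 2 | a : F].
pose S1 := [set c1 * s | s in S]; pose S2 := [set e - c2 * s | s in S].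
have card_S1 : #|S1| = #|S| by apply: card_imset => s t /mulfI; apply.
have card_S2 : #|S2| = #|S| by apply: card_imset => s t /addrI/oppr_inj/mulfI; apply.
have : S1 :&: S2 != set0.
  apply: contraTneq card_sqr_gt => S12_0; rewrite -leqNgt mul2n -addnn.
  by rewrite -{1}card_S1 -card_S2 -cardsUI S12_0 cards0 addn0 max_card.
case/set0Pn => _ /setIP [/imsetP [_ /imsetP [a _ ->] ->]].
by case/imsetP => _ /imsetP [b _ ->] /eqP; rewrite eq_sym subr_eq => /eqP ->; exists a, b.
Qed.

Lemma exists_neq2 (x1 x2 : F) : exists t, (t != x1) && (t != x2).
Proof.
have lt_x12F : (#|[set x1; x2]| < #|F|)%N.
  rewrite cards2 (@leq_ltn_trans 2) //; first by case: (_ != _).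
  by move: oddF (finNzRing_gt1 F); case: #|F| => [|[|[|k]]].
have [t] : exists t, t \notin [set x1; x2].
  apply/existsP; apply: contraTT lt_x12F => /existsPn all_x12; rewrite -leqNgt.
  by apply: subset_leq_card; apply/subsetP => t _; apply: negbNE (all_x12 t).
by rewrite !inE negb_or; exists t.
Qed.

End OddFiniteField.

Lemma prim_orbit_sub (T : finType) (G : {group {perm T}}) (x : T) (B : {set T}) :
  [primitive G, on orbit 'P G x | 'P] -> x \in B ->
  (forall g, g \in G -> g x = x -> {in B, forall p, g p \in B}) ->
  (exists2 h, h \in G & h x != x /\ {in B, forall p, h p \in B}) ->
  orbit 'P G x \subset B.
Proof.
move=> primG xB stabB [h hG [hx hB]].
have xX : x \in orbit 'P G x := orbit_refl _ _ _.
have /andP [trG _] := primG.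
move: primG; rewrite (trans_prim_astab xX trG) => /maximal_eqP [_ maxGx].
have inN g : g \in G -> {in B, forall p, g p \in B} -> g \in ('N_G(B | 'P))%g.
  move=> gG gB; apply/setIP; split; rewrite // /astabs; apply/setIP; split => //.
  by rewrite in_set; apply/subsetP => p pB; rewrite !in_set /= apermE gB.
have sub_CN : ('C_G[x | 'P] \subset 'N_G(B | 'P))%g.
  apply/subsetP => g /setIP [gG /astab1P]; rewrite /= apermE => gx.
  exact: inN gG (stabB g gG gx).
case: (maxGx ('N_G(B | 'P))%G sub_CN (subsetIl _ _)) => [NC|NG].
  have /setIP [_ /astab1P] : h \in ('C_G[x | 'P])%g by rewrite -NC /= inN.
  by rewrite /= apermE => hx_x; rewrite hx_x eqxx in hx.
apply/subsetP => _ /orbitP [g gG <-]; have /setIP [_ gN] : g \in ('N_G(B | 'P))%g by rewrite NG.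
by have := astabs_act x gN; rewrite xB.
Qed.

Section QuadraticSpace.
Variables (F : finFieldType) (n : nat) (A : 'M[F]_n).
Hypotheses (symA : A^T = A) (oddF : odd #|F|).

Local Notation "''[' u , v ]" := (form idfun A u v) : ring_scope.
Local Notation "''[' u ]" := '[u, u] : ring_scope.
Local Notation two_neq0 := (two_neq0 oddF).
Implicit Types (u v w a b c d : 'rV[F]_n) (M : 'M[F]_n).

Lemma qformE v : qform A v = '[v].
Proof. by rewrite /form map_mx_id. Qed.

Lemma form_mxE u v : u *m A *m v^T = '[u, v]%:M.
Proof. rewrite /form map_mx_id //; exact: mx11_scalar. Qed.

Lemma formZr_idfun (x : F) u v : '[u, x *: v] = x * '[u, v].
Proof. exact: formZr. Qed.

Let sesquiA : A \is (false, idfun : {rmorphism F -> F}).-sesqui.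
Proof.
by rewrite sesquiE expr0 scale1r -[A in A == _]symA; apply/eqP/matrixP => i j; rewrite !mxE.
Qed.

Lemma formC_sym u v : '[u, v] = '[v, u].
Proof. by rewrite (formC _ sesquiA) //; exact: mul1r. Qed.

Lemma formD_sym u v : '[u + v] = '[u] + '[v] + 2 * '[u, v].
Proof. by rewrite (formD _ sesquiA) // expr0 mul1r -mulr2n mulr_natl. Qed.

Lemma formB_sym u v : '[u - v] = '[u] + '[v] - 2 * '[u, v].
Proof. by rewrite formD_sym formN formNr mulrN. Qed.

Lemma formZ_idfun (x : F) u : '[x *: u] = x ^+ 2 * '[u].
Proof. by rewrite formZ expr2. Qed.

Lemma formD_orth u v : '[u, v] = 0 -> '[u + v] = '[u] + '[v].
Proof. by move=> uv0; rewrite formD_sym uv0 mulr0 addr0. Qed.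

Definition isometry_mx M := forall v, '[v *m M] = '[v].

Lemma isometry_mx_form M : isometry_mx M -> forall u v, '[u *m M, v *m M] = '[u, v].
Proof.
move=> isoM u v; have := isoM (u + v).
by rewrite mulmxDl !formD_sym !isoM => /addrI/(mulfI two_neq0).
Qed.

Definition refl_mx a : 'M[F]_n := 1%:M - (2 / '[a]) *: (A *m a^T *m a).

Lemma refl_mxE a v : v *m refl_mx a = v - (2 / '[a] * '[v, a]) *: a.
Proof.
rewrite /refl_mx mulmxBr mulmx1 -scalemxAr !mulmxA form_mxE mul_scalar_mx.
by rewrite scalerA.
Qed.

Lemma refl_mx_iso a : '[a] != 0 -> isometry_mx (refl_mx a).
Proof. by move=> nz_a v; rewrite refl_mxE formB_sym formZ_idfun formZr_idfun; field. Qed.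

Lemma refl_mx_self a : '[a] != 0 -> a *m refl_mx a = - a.
Proof.
move=> nz_a; rewrite refl_mxE divfK //.
by rewrite scaler_nat mulr2n opprD addrA subrr add0r.
Qed.

Lemma refl_mx_orth a v : '[v, a] = 0 -> v *m refl_mx a = v.
Proof. by move=> va0; rewrite refl_mxE va0 mulr0 scale0r subr0. Qed.

Lemma refl_mxK a : '[a] != 0 -> refl_mx a *m refl_mx a = 1%:M.
Proof.
move=> nz_a; apply/eqP/mulmxP => v; rewrite mulmx1 mulmxA.
rewrite [v *m refl_mx a]refl_mxE mulmxBl -scalemxAl refl_mx_self // (refl_mxE a v).
by rewrite scalerN opprK subrK.
Qed.

Lemma refl_mx_unit a : '[a] != 0 -> refl_mx a \in unitmx.
Proof. by move=> nz_a; case: (mulmx1_unit (refl_mxK nz_a)). Qed.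

Lemma refl_mxZ (x : F) a : x != 0 -> refl_mx (x *: a) = refl_mx a.
Proof.
move=> nz_x; apply/eqP/mulmxP => v; rewrite !refl_mxE formZ_idfun formZr_idfun scalerA.
have [->|nz_a] := eqVneq '[a] 0; first by rewrite mulr0 !invr0 !mulr0 !mul0r.
by congr (_ - _ *: _); field; rewrite nz_a nz_x.
Qed.

Lemma refl_mxN a : refl_mx (- a) = refl_mx a.
Proof. by rewrite -scaleN1r refl_mxZ // oppr_eq0 oner_eq0. Qed.

Lemma refl_mx_conj u a : '[u] != 0 -> '[a] != 0 ->
  refl_mx u *m refl_mx a *m refl_mx u = refl_mx (a *m refl_mx u).
Proof.
move=> nz_u nz_a; apply/eqP/mulmxP => v; have iso_u := refl_mx_iso nz_u.
rewrite !mulmxA (refl_mxE a) mulmxBl -scalemxAl -(mulmxA v) refl_mxK // mulmx1.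
rewrite (refl_mxE (a *m refl_mx u) v) (iso_u a).
by rewrite -(isometry_mx_form iso_u (v *m refl_mx u) a) -(mulmxA v) refl_mxK // mulmx1.
Qed.

Lemma refl_mx_swapB u v : '[u] = '[v] -> '[u - v] != 0 -> u *m refl_mx (u - v) = v.
Proof.
move=> eq_uv nz_uv; rewrite refl_mxE.
have norm_uv : '[u - v] = 2 * '[u, u - v] by rewrite formB_sym formDr formNr -eq_uv; ring.
have nz_uuv : '[u, u - v] != 0 by apply: contraNneq nz_uv; rewrite norm_uv => ->; rewrite mulr0.
have -> : 2 / '[u - v] * '[u, u - v] = 1 by rewrite norm_uv; field; rewrite two_neq0 nz_uuv.
by rewrite scale1r opprB addrC subrK.
Qed.

Lemma refl_mx_swapD u v : '[u] = '[v] -> '[u + v] != 0 -> u *m refl_mx (u + v) = - v.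
Proof. by have := @refl_mx_swapB u (- v); rewrite opprK formN. Qed.

Lemma formB_formD_neq0 u v : '[u] != 0 -> '[u] = '[v] -> ('[u - v] != 0) || ('[u + v] != 0).
Proof.
move=> nz_u eq_uv; rewrite -negb_and; apply: contra nz_u => /andP [/eqP uv0 /eqP uv1].
have : '[u - v] + '[u + v] = 2 * 2 * '[u] by rewrite formB_sym formD_sym -eq_uv; ring.
by rewrite uv0 uv1 addr0 => /esym/eqP; rewrite !mulf_eq0 (negbTE two_neq0).
Qed.

Local Notation point := (point F n).
Local Notation line := (@line F n).

Lemma lineP u v : reflect (exists x, v = x *: u) (v \in line u).
Proof. by apply: (iffP imsetP) => [[x _ ->]|[x ->]]; exists x. Qed.

Lemma line_id u : u \in line u.
Proof. by apply/lineP; exists 1; rewrite scale1r. Qed.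

Lemma eq_lineP u v : u != 0 -> v != 0 ->
  reflect (exists2 x, x != 0 & v = x *: u) (line u == line v).
Proof.
move=> nz_u nz_v; apply: (iffP eqP) => [eq_uv|[x nz_x ->]].
  have /lineP [x def_v] : v \in line u by rewrite eq_uv line_id.
  by exists x => //; apply: contraNneq nz_v => x0; rewrite def_v x0 scale0r.
apply/setP => w; apply/lineP/lineP => [[y ->]|[y ->]].
  by exists (y / x); rewrite scalerA mulfVK.
by exists (y * x); rewrite scalerA.
Qed.

Lemma lineZ (x : F) u : x != 0 -> line (x *: u) = line u.
Proof.
move=> nz_x; apply/setP => w; apply/lineP/lineP => [[y ->]|[y ->]].
  by exists (y * x); rewrite scalerA.
by exists (y / x); rewrite scalerA mulfVK.
Qed.

Lemma lineN u : line (- u) = line u.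
Proof. by rewrite -scaleN1r lineZ // oppr_eq0 oner_eq0. Qed.

Lemma memN_line u v : (- v \in line u) = (v \in line u).
Proof.
apply/lineP/lineP => [[x ev]|[x ->]]; exists (- x); rewrite scaleNr //.
by rewrite -ev opprK.
Qed.

Lemma is_point_line u : u != 0 -> is_point (line u).
Proof. by move=> nz_u; apply/existsP; exists u; rewrite nz_u eqxx. Qed.

Definition point_of u (nz_u : u != 0) : point := exist _ (line u) (is_point_line nz_u).

Lemma pointP (p : point) : exists2 u, u != 0 & val p = line u.
Proof. by case: p => S /= /existsP [u /andP [nz_u /eqP ->]]; exists u. Qed.

Lemma semilin_image_line M u : semilin_image id M (line u) = line (u *m M).
Proof.
apply/setP => w.
apply/imsetP/lineP => [[_ /lineP [x ->] ->]|[x ->]].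
  by exists x; rewrite map_mx_id // scalemxAl.
by exists (x *: u); [apply/lineP; exists x | rewrite map_mx_id // scalemxAl].
Qed.

Lemma unitmx_row_neq0 M u : M \in unitmx -> u != 0 -> u *m M != 0.
Proof.
move=> unitM; apply: contraNneq => uM0.
by rewrite -[u]mulmx1 -(mulmxV unitM) mulmxA uM0 mul0mx.
Qed.

Definition mxperm_fun M (p : point) : point := insubd p (semilin_image id M (val p)).

Lemma mxperm_funE M p u : M \in unitmx -> u != 0 -> val p = line u ->
  val (mxperm_fun M p) = line (u *m M).
Proof.
move=> unitM nz_u def_p; rewrite /mxperm_fun def_p semilin_image_line insubdK //.
exact/is_point_line/unitmx_row_neq0.
Qed.

Lemma mxperm_fun_inj M : M \in unitmx -> injective (mxperm_fun M).
Proof.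
move=> unitM p1 p2 /(congr1 val).
have [u1 nz_u1 def_p1] := pointP p1; have [u2 nz_u2 def_p2] := pointP p2.
rewrite (mxperm_funE unitM nz_u1 def_p1) (mxperm_funE unitM nz_u2 def_p2) => /eqP.
case/eq_lineP; try exact: unitmx_row_neq0.
move=> x nz_x; rewrite scalemxAl => /(can_inj (mulmxK unitM)) eq_u12.
by apply: val_inj; rewrite def_p1 def_p2; apply/eqP/eq_lineP => //; exists x.
Qed.

(* [mxperm M] is the identity permutation when M is singular. *)
Definition mxperm M : {perm point} :=
  insubd (1%g : {perm point}) ([ffun p => mxperm_fun M p] : {ffun point -> point}).

Lemma mxpermE M p u : M \in unitmx -> u != 0 -> val p = line u ->
  val (mxperm M p) = line (u *m M).
Proof.
move=> unitM nz_u def_p.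
have inj : injectiveb ([ffun p => mxperm_fun M p] : {ffun point -> point}).
  by apply/injectiveP => p1 p2; rewrite !ffunE; apply: mxperm_fun_inj.
have -> : mxperm M = Perm inj by apply: val_inj; rewrite /mxperm insubdK.
by rewrite -pvalE /= ffunE; apply: mxperm_funE.
Qed.

Lemma mxpermM M N : M \in unitmx -> N \in unitmx -> mxperm (M *m N) = (mxperm M * mxperm N)%g.
Proof.
move=> unitM unitN; apply/permP => p; rewrite permM.
have [u nz_u def_p] := pointP p; have unitMN : M *m N \in unitmx by rewrite unitmx_mul unitM.
apply: val_inj; rewrite (mxpermE _ nz_u def_p) // mulmxA.
by rewrite (mxpermE unitN _ (mxpermE unitM nz_u def_p)) // unitmx_row_neq0.
Qed.

Lemma mxpermV M : M *m M = 1%:M -> (mxperm M)^-1%g = mxperm M.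
Proof.
move=> MM1; have [unitM _] := mulmx1_unit MM1; apply/eqP; rewrite eq_invg_mul -mxpermM //.
apply/eqP/permP => p; rewrite perm1 MM1; have [u nz_u def_p] := pointP p.
by apply: val_inj; rewrite (mxpermE _ nz_u def_p) ?unitmx1 // mulmx1.
Qed.

Lemma mxperm_PO M : M \in unitmx -> isometry_mx M -> mxperm M \in PO A.
Proof.
move=> unitM isoM; rewrite inE; apply/existsP; exists M; rewrite unitM /=.
apply/andP; split; first by apply/forallP => v; rewrite !qformE isoM.
apply/forallP => p; have [u nz_u def_p] := pointP p.
by rewrite (mxpermE unitM nz_u def_p) def_p semilin_image_line.
Qed.

Definition omega_mx M := [/\ M \in unitmx, isometry_mx M & mxperm M \in POmega A].

Lemma omega_mxM M N : omega_mx M -> omega_mx N -> omega_mx (M *m N).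
Proof.
case=> unitM isoM OmM [unitN isoN OmN]; split; first by rewrite unitmx_mul unitM.
  by move=> v; rewrite mulmxA isoN isoM.
by rewrite mxpermM // groupM.
Qed.

(* r_a r_b is the commutator [r_a, r_u] for a reflection r_u sending a to +-b. *)
Lemma omega_refl2 a b : '[a] != 0 -> '[a] = '[b] -> omega_mx (refl_mx a *m refl_mx b).
Proof.
move=> nz_a eq_ab; have nz_b : '[b] != 0 by rewrite -eq_ab.
split; first by rewrite unitmx_mul !refl_mx_unit.
  by move=> v; rewrite mulmxA !refl_mx_iso.
have [u nz_u ab_u] : exists2 u, '[u] != 0 & refl_mx b = refl_mx (a *m refl_mx u).
  case/orP: (formB_formD_neq0 nz_a eq_ab) => nz_ab.
    by exists (a - b); rewrite // refl_mx_swapB.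
  by exists (a + b); rewrite // refl_mx_swapD // refl_mxN.
rewrite ab_u -refl_mx_conj // !mulmxA !mxpermM ?unitmx_mul ?refl_mx_unit //.
have PO_refl c : '[c] != 0 -> mxperm (refl_mx c) \in PO A.
  by move=> nz_c; apply: mxperm_PO; [exact: refl_mx_unit | exact: refl_mx_iso].
have [PO_a PO_u] := (PO_refl a nz_a, PO_refl u nz_u).
have [raV ruV] := (mxpermV (refl_mxK nz_a), mxpermV (refl_mxK nz_u)).
move: (mxperm (refl_mx a)) (mxperm (refl_mx u)) PO_a PO_u raV ruV => ra ru PO_a PO_u raV ruV.
have -> : (ra * ru * ra * ru = [~ ra, ru])%g by rewrite /commg /conjg raV ruV !mulgA.
exact: mem_commg.
Qed.

(* [gram L \in unitmx]: the rows of L are independent and span a non-degenerate subspace. *)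
Definition gram k (L : 'M[F]_(k, n)) := L *m A *m L^T.

Definition orth k (L : 'M[F]_(k, n)) v := v *m A *m L^T = 0.

Lemma orth_form k (L : 'M[F]_(k, n)) v (w : 'rV_k) : orth L v -> '[v, w *m L] = 0.
Proof. by move=> Lv; rewrite /form map_mx_id // trmx_mul mulmxA Lv mul0mx mxE. Qed.

Lemma orth1 u v : orth u v <-> '[v, u] = 0.
Proof.
rewrite /orth form_mxE; split => [/matrixP/(_ 0 0)|->]; last exact: raddf0.
by rewrite !mxE mulr1n.
Qed.

Lemma orth_col k (L : 'M[F]_(k, n)) u v : orth (col_mx L u) v <-> orth L v /\ '[v, u] = 0.
Proof.
rewrite -orth1 /orth tr_col_mx mul_mx_row; split => [/eqP|[-> ->]]; last exact: row_mx0.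
by rewrite row_mx_eq0 => /andP [/eqP ? /eqP ?].
Qed.

Lemma exists_orth k (L : 'M[F]_(k, n)) : (k < n)%N -> exists2 v, v != 0 & orth L v.
Proof.
move=> lt_kn; have /rowV0Pn [v /sub_kermxP Lv nz_v] : kermx (A *m L^T) != 0.
  by rewrite kermx_eq0 /row_free neq_ltn (leq_ltn_trans (rank_leq_col _) lt_kn).
by exists v; rewrite // /orth -mulmxA.
Qed.

Lemma gram1_unit v : '[v] != 0 -> gram v \in unitmx.
Proof. by rewrite unitmxE det_mx11 /gram form_mxE mxE mulr1n unitfE. Qed.

Lemma gram_col_unit k (L : 'M[F]_(k, n)) u :
  gram L \in unitmx -> orth L u -> '[u] != 0 -> gram (col_mx L u) \in unitmx.
Proof.
move=> unitL Lu nz_u; rewrite /gram tr_col_mx mul_col_mx mul_col_row Lu.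
by rewrite unitmxE det_ublock unitrM -unitmxE unitL det_mx11 form_mxE mxE mulr1n unitfE.
Qed.

Section Nondegenerate.
Hypothesis detA : \det A != 0.

(* Witness: the projection onto L^perp of a coordinate vector e_j with (v A)_j != 0. *)
Lemma orth_nondeg k (L : 'M[F]_(k, n)) v : gram L \in unitmx -> v != 0 -> orth L v ->
  exists2 w, orth L w & '[v, w] != 0.
Proof.
move=> unitL nz_v Lv; have unitA : A \in unitmx by rewrite unitmxE unitfE.
have /rV0Pn [j vAj] : v *m A != 0 by apply: unitmx_row_neq0.
pose e : 'rV[F]_n := delta_mx 0 j.
exists (e - e *m A *m L^T *m invmx (gram L) *m L).
  by rewrite /orth !mulmxBl -!mulmxA [L *m (A *m L^T)]mulmxA mulVmx // mulmx1 subrr.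
by rewrite formDr formNr orth_form // subr0 /form map_mx_id // trmx_delta -colE mxE.
Qed.

Lemma orth_aniso k (L : 'M[F]_(k, n)) : (k < n)%N -> gram L \in unitmx ->
  exists2 u, orth L u & '[u] != 0.
Proof.
move=> lt_kn unitL; have [v nz_v Lv] := exists_orth L lt_kn.
have [w Lw vw] := orth_nondeg unitL nz_v Lv.
have [v0|] := eqVneq '[v] 0; last by exists v.
have [w0|] := eqVneq '[w] 0; last by exists w.
exists (v + w); first by rewrite /orth !mulmxDl Lv Lw addr0.
by rewrite formD_sym v0 w0 !add0r mulf_neq0 ?two_neq0.
Qed.

Lemma orth_represent k (L : 'M[F]_(k, n)) (x : F) : (k.+1 < n)%N -> gram L \in unitmx ->
  exists2 u, orth L u & '[u] = x.
Proof.
move=> lt_k1n unitL; have [u Lu nz_u] := orth_aniso (ltnW lt_k1n) unitL.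
have lt_k1n' : (k + 1 < n)%N by rewrite addn1.
have [w /orth_col [Lw wu] nz_w] := orth_aniso lt_k1n' (gram_col_unit unitL Lu nz_u).
have [a [b def_x]] := sum_two_squares oddF x nz_u nz_w.
exists (a *: u + b *: w); first by rewrite /orth !mulmxDl -!scalemxAl Lu Lw !scaler0 addr0.
have uw : '[a *: u, b *: w] = 0 by rewrite formZl formZr_idfun formC_sym wu !mulr0.
by rewrite formD_orth // !formZ_idfun -def_x mulrC [b ^+ 2 * _]mulrC.
Qed.

Lemma orth_isotropic k (L : 'M[F]_(k, n)) : (k.+2 < n)%N -> gram L \in unitmx ->
  exists t, [/\ orth L t, t != 0 & '[t] = 0].
Proof.
move=> lt_k2n unitL; have [u Lu nz_u] := orth_aniso (ltnW (ltnW lt_k2n)) unitL.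
have lt_k2n' : ((k + 1).+1 < n)%N by rewrite addn1.
have [w /orth_col [Lw wu] norm_w] := orth_represent (- '[u]) lt_k2n' (gram_col_unit unitL Lu nz_u).
exists (w + u); split; first by rewrite /orth !mulmxDl Lw Lu addr0.
  have wuu : '[w + u, u] = '[u] by rewrite formDl wu add0r.
  by apply: (contraNneq _ nz_u) => wu0; rewrite -wuu wu0 form0l.
by rewrite formD_orth // norm_w addNr.
Qed.

Lemma perp_represent v (x : F) : (2 < n)%N -> '[v] != 0 -> exists2 d, '[d, v] = 0 & '[d] = x.
Proof.
move=> lt2n nz_v; have [d /orth1 dv dx] := orth_represent x lt2n (gram1_unit nz_v).
by exists d.
Qed.

Lemma perp_isotropic v : (3 < n)%N -> '[v] != 0 -> exists t, [/\ '[t, v] = 0, t != 0 & '[t] = 0].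
Proof.
move=> lt3n nz_v; have [t [/orth1 tv nz_t t0]] := orth_isotropic lt3n (gram1_unit nz_v).
by exists t.
Qed.

Lemma perp_nondeg v w : '[v] != 0 -> w != 0 -> '[w, v] = 0 -> exists2 y, '[y, v] = 0 & '[w, y] != 0.
Proof.
move=> nz_v nz_w /orth1 vw; have [y /orth1 yv wy] := orth_nondeg (gram1_unit nz_v) nz_w vw.
by exists y.
Qed.

Lemma hyperbolic_partner v b : '[v] != 0 -> b != 0 -> '[b, v] = 0 -> '[b] = 0 ->
  exists c, [/\ '[c, v] = 0, '[c] = 0 & '[b, c] = 1].
Proof.
move=> nz_v nz_b bv b0; have [y yv by_] := perp_nondeg nz_v nz_b bv.
have [y1 y1v by1] : exists2 y1, '[y1, v] = 0 & '[b, y1] = 1.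
  by exists ('[b, y]^-1 *: y); rewrite ?formZl ?yv ?mulr0 // formZr_idfun mulVf.
exists (y1 - ('[y1] / 2) *: b); split.
- by rewrite formDl formNl formZl bv y1v mulr0 subrr.
- rewrite formB_sym formZ_idfun formZr_idfun b0 mulr0 addr0 formC_sym by1.
  by field; rewrite two_neq0.
- by rewrite formDr formNr formZr_idfun b0 mulr0 subr0.
Qed.

Lemma perp2_represent_orth v b (x : F) : (4 < n)%N -> '[v] != 0 -> '[b, v] = 0 ->
  exists d, [/\ '[d, v] = 0, '[d, b] = 0 & '[d] = x].
Proof.
move=> lt4n nz_v bv; have lt2n : (2 < n)%N by apply: leq_trans lt4n.
have unit_v := gram1_unit nz_v.
have [->|nz_b] := eqVneq b 0.
  by have [d dv dx] := perp_represent x lt2n nz_v; exists d; rewrite form0r.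
have [nz_bb|b0] := boolP ('[b] != 0).
  have lt3n : ((1 + 1).+1 < n)%N by apply: ltnW.
  have unit_vb := gram_col_unit unit_v ((orth1 _ _).2 bv) nz_bb.
  by have [d /orth_col [/orth1 dv db] dx] := orth_represent x lt3n unit_vb; exists d.
(* For isotropic b, d is taken orthogonal to v, b + c and b - c, for a hyperbolic partner c. *)
move/negPn/eqP: b0 => b0; have [c [cv c0 bc]] := hyperbolic_partner nz_v nz_b bv b0.
pose h1 := b + c; pose h2 := b - c.
have h1v : '[h1, v] = 0 by rewrite formDl bv cv addr0.
have h2v : '[h2, v] = 0 by rewrite formDl formNl bv cv subrr.
have nz_h1 : '[h1] != 0 by rewrite formD_sym b0 c0 bc addr0 add0r mulr1 two_neq0.
have nz_h2 : '[h2] != 0 by rewrite formB_sym b0 c0 bc addr0 add0r mulr1 oppr_eq0 two_neq0.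
have h21 : '[h2, h1] = 0 by rewrite formDl formNl !formDr (formC_sym c b) bc b0 c0; ring.
have unit_vh1 := gram_col_unit unit_v ((orth1 _ _).2 h1v) nz_h1.
have vh1_h2 : orth (col_mx v h1) h2 by apply/orth_col; split; [exact/orth1 | exact: h21].
have unit_vh12 := gram_col_unit unit_vh1 vh1_h2 nz_h2.
have [d /orth_col [/orth_col [/orth1 dv dh1] dh2] dx] :=
  orth_represent x (lt4n : ((1 + 1 + 1).+1 < n)%N) unit_vh12.
exists d; split => //.
have : '[d, h1 + h2] = 0 by rewrite formDr dh1 dh2 addr0.
rewrite /h1 /h2 addrACA subrr addr0 -mulr2n -scaler_nat formZr_idfun => /eqP.
by rewrite mulf_eq0 (negbTE two_neq0) => /eqP.
Qed.

Lemma perp2_represent v b (x : F) : (4 < n)%N -> '[v] != 0 ->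
  exists d, [/\ '[d, v] = 0, '[d, b] = 0 & '[d] = x].
Proof.
move=> lt4n nz_v; pose b' := b - ('[b, v] / '[v]) *: v.
have b'v : '[b', v] = 0 by rewrite formDl formNl formZl divfK // subrr.
have [d [dv db' dx]] := perp2_represent_orth x lt4n nz_v b'v.
by exists d; split => //; move: db'; rewrite formDr formNr formZr_idfun dv mulr0 subr0.
Qed.

(* Correct r_u by a reflection r_d fixing a r_u, with '[d] = '[u]. *)
Lemma omega_mx_refl_image a u : (2 < n)%N -> '[a] != 0 -> '[u] != 0 ->
  exists2 M, omega_mx M & a *m M = a *m refl_mx u.
Proof.
move=> lt2n nz_a nz_u; have nz_au : '[a *m refl_mx u] != 0 by rewrite refl_mx_iso.
have [d d_au du] := perp_represent '[u] lt2n nz_au.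
exists (refl_mx u *m refl_mx d); first by apply: omega_refl2.
by rewrite mulmxA refl_mx_orth // formC_sym.
Qed.

Lemma omega_trans v w : (2 < n)%N -> '[v] != 0 -> '[v] = '[w] ->
  exists2 M, omega_mx M & v *m M = w.
Proof.
move=> lt2n nz_v eq_vw; have nz_w : '[w] != 0 by rewrite -eq_vw.
case/orP: (formB_formD_neq0 nz_v eq_vw) => [nz_vw|nz_vw].
  by rewrite -(refl_mx_swapB eq_vw nz_vw); apply: omega_mx_refl_image.
have [M1 OmM1 vM1] := omega_mx_refl_image lt2n nz_v nz_vw.
have nz_nw : '[- w] != 0 by rewrite formN.
have [M2 OmM2 wM2] := omega_mx_refl_image lt2n nz_nw nz_w.
exists (M1 *m M2); first exact: omega_mxM.
by rewrite mulmxA vM1 refl_mx_swapD // wM2 mulNmx refl_mx_self // opprK.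
Qed.

Definition omega_move v a b := exists M, [/\ omega_mx M, v *m M = v & a *m M = b].

Lemma omega_move_trans v a b c : omega_move v a b -> omega_move v b c -> omega_move v a c.
Proof.
case=> [M [OmM vM aM]] [N [OmN vN bN]]; exists (M *m N).
by split; [exact: omega_mxM | rewrite mulmxA vM | rewrite mulmxA aM].
Qed.

Lemma omega_move_shift v a b (x : F) :
  omega_move v a b -> omega_move v (a + x *: v) (b + x *: v).
Proof.
by case=> [M [OmM vM aM]]; exists M; rewrite mulmxDl -scalemxAl vM aM.
Qed.

Lemma omega_move_refl v a u : (4 < n)%N -> '[v] != 0 -> '[u] != 0 -> '[u, v] = 0 ->
  omega_move v a (a *m refl_mx u).
Proof.
move=> lt4n nz_v nz_u uv; have [d [dv d_au du]] := perp2_represent (a *m refl_mx u) '[u] lt4n nz_v.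
exists (refl_mx u *m refl_mx d); split; first by apply: omega_refl2.
  by rewrite mulmxA !refl_mx_orth // formC_sym.
by rewrite mulmxA refl_mx_orth // formC_sym.
Qed.

Lemma omega_move_swap v a b : (4 < n)%N -> '[v] != 0 -> '[a, v] = 0 -> '[b, v] = 0 ->
  '[a] = '[b] -> '[a - b] != 0 -> omega_move v a b.
Proof.
move=> lt4n nz_v av bv eq_ab nz_ab; rewrite -(refl_mx_swapB eq_ab nz_ab).
by apply: omega_move_refl; rewrite // formDl formNl av bv subrr.
Qed.

Lemma perp_nondeg2 v a b : '[v] != 0 -> a != 0 -> b != 0 -> '[a, v] = 0 -> '[b, v] = 0 ->
  exists2 e, '[e, v] = 0 & ('[a, e] != 0) && ('[b, e] != 0).
Proof.
move=> nz_v nz_a nz_b av bv.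
have [e1 e1v ae1] := perp_nondeg nz_v nz_a av; have [e2 e2v be2] := perp_nondeg nz_v nz_b bv.
have [t /andP [ta tb]] := exists_neq2 oddF (- '[a, e1] / '[a, e2]) (- '[b, e1] / '[b, e2]).
exists (e1 + t *: e2); first by rewrite formDl formZl e1v e2v mulr0 addr0.
by rewrite !formDr !formZr_idfun !addr_mul_neq0 ?ae1 ?be2 ?orbT.
Qed.

Lemma isotropic_link v a b : '[v] != 0 -> a != 0 -> b != 0 -> '[a, v] = 0 -> '[b, v] = 0 ->
  '[a] = 0 -> '[b, a] = 0 -> exists c, [/\ '[c, v] = 0, '[c] = 0, '[a, c] != 0 & '[b, c] != 0].
Proof.
move=> nz_v nz_a nz_b av bv a0 ba; have [e ev /andP [ae be]] := perp_nondeg2 nz_v nz_a nz_b av bv.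
exists (e - ('[e] / (2 * '[a, e])) *: a); split.
- by rewrite formDl formNl formZl av ev mulr0 subrr.
- rewrite formB_sym formZ_idfun a0 mulr0 addr0 formZr_idfun (formC_sym e a); field.
  by rewrite two_neq0 ae.
- by rewrite formDr formNr formZr_idfun a0 mulr0 subr0.
- by rewrite formDr formNr formZr_idfun ba mulr0 subr0.
Qed.

Lemma omega_move_perp v a b : (4 < n)%N -> '[v] != 0 -> '[a, v] = 0 -> '[b, v] = 0 ->
  a != 0 -> b != 0 -> '[a] = '[b] -> omega_move v a b.
Proof.
move=> lt4n nz_v av bv nz_a nz_b eq_ab.
have nz2 (x : F) : x != 0 -> - (2 * x) != 0 by move=> nz_x; rewrite oppr_eq0 mulf_neq0 ?two_neq0.
have [nz_aa|/negPn/eqP a0] := boolP ('[a] != 0).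
  case/orP: (formB_formD_neq0 nz_aa eq_ab) => nz_ab; first exact: omega_move_swap.
  apply: (@omega_move_trans _ _ (- b)).
    by apply: omega_move_swap; rewrite ?formN ?formNl ?bv ?oppr0 ?opprK.
  have nz_bb : '[b] != 0 by rewrite -eq_ab.
  have := @omega_move_refl v (- b) b lt4n nz_v nz_bb bv.
  by rewrite mulNmx refl_mx_self // opprK.
have b0 : '[b] = 0 by rewrite -eq_ab.
have [ab0|nz_ab] := eqVneq '[a, b] 0; last first.
  by apply: omega_move_swap; rewrite // formB_sym a0 b0 !add0r nz2.
have ba0 : '[b, a] = 0 by rewrite formC_sym.
have [c [cv c0 ac bc]] := isotropic_link nz_v nz_a nz_b av bv a0 ba0.
apply: (@omega_move_trans _ _ c); apply: omega_move_swap; rewrite ?a0 ?b0 ?c0 //.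
- by rewrite formB_sym a0 c0 !add0r nz2.
- by rewrite formB_sym c0 b0 !add0r (formC_sym c b) nz2.
Qed.

Lemma omega_move_witt v a b : (4 < n)%N -> '[v] != 0 -> '[a] = '[b] -> '[v, a] = '[v, b] ->
  a \notin line v -> b \notin line v -> omega_move v a b.
Proof.
move=> lt4n nz_v eq_ab vab av bv; pose x := '[v, a] / '[v].
have [-> ->] : a = (a - x *: v) + x *: v /\ b = (b - x *: v) + x *: v by rewrite !subrK.
apply: omega_move_shift; apply: omega_move_perp => //.
- by rewrite formDl formNl formZl formC_sym divfK // subrr.
- by rewrite formDl formNl formZl formC_sym -vab divfK // subrr.
- by apply: contraNneq av => /subr0_eq ->; apply/lineP; exists x.
- by apply: contraNneq bv => /subr0_eq ->; apply/lineP; exists x.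
- by rewrite !formB_sym !formZ_idfun !formZr_idfun (formC_sym a) (formC_sym b) -vab eq_ab.
Qed.

Lemma omega_map_pair v a u d : (4 < n)%N -> '[v] != 0 -> '[v] = '[u] -> '[a] = '[d] ->
  '[u, d] = '[v, a] \/ '[u, d] = - '[v, a] -> a \notin line v -> d \notin line u ->
  exists2 M, omega_mx M & line (v *m M) = line u /\ line (a *m M) = line d.
Proof.
move=> lt4n nz_v eq_vu eq_ad uda av du; have lt2n : (2 < n)%N by apply: ltnW (ltnW _).
have [M1 OmM1 vM1] := omega_trans lt2n nz_v eq_vu; have [unitM1 isoM1 _] := OmM1.
have nz_u : '[u] != 0 by rewrite -eq_vu.
have a1u : a *m M1 \notin line u.
  apply: contra av => /lineP [x a1x]; apply/lineP; exists x.
  by apply: (can_inj (mulmxK unitM1)); rewrite -scalemxAl vM1.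
have ua1 : '[u, a *m M1] = '[v, a] by rewrite -vM1 isometry_mx_form.
have a1d : '[a *m M1] = '[d] by rewrite isoM1.
have [d' [a1d' ua1d' d'u ld']] : exists d', [/\ '[a *m M1] = '[d'], '[u, a *m M1] = '[u, d'],
    d' \notin line u & line d' = line d].
  case: uda => uda; [exists d | exists (- d)].
    by rewrite ua1 uda.
  by rewrite formN formNr memN_line lineN ua1 uda opprK.
have [M2 [OmM2 uM2 a1M2]] := omega_move_witt lt4n nz_u a1d' ua1d' a1u d'u.
exists (M1 *m M2); first exact: omega_mxM.
by rewrite !mulmxA vM1 uM2 a1M2.
Qed.

Lemma exists_common_partner u w (c beta : F) : (4 < n)%N -> '[u] = c -> '[w] = c -> c != 0 ->
  exists d, [/\ '[d] = c, '[u, d] = beta & '[w, d] = beta \/ '[w, d] = - beta].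
Proof.
move=> lt4n uc wc nz_c; have nz_u : '[u] != 0 by rewrite uc.
(* d = d0 + t, with d0 in <u, w> fixing the inner products and t orthogonal to u, w. *)
suff [d0 [ud0 wd0 d0_span]] : exists d0, [/\ '[u, d0] = beta, '[w, d0] = beta \/ '[w, d0] = - beta
    & forall t, '[t, u] = 0 -> '[t, w] = 0 -> '[d0, t] = 0].
  have [t [tu tw tc]] := perp2_represent w (c - '[d0]) lt4n nz_u.
  exists (d0 + t); split.
  - rewrite formD_orth; last exact: d0_span.
    by rewrite tc addrC subrK.
  - by rewrite formDr ud0 formC_sym tu addr0.
  - by rewrite formDr (formC_sym w t) tw !addr0.
have span (x s : F) t : '[t, u] = 0 -> '[t, w] = 0 -> '[x *: (u + s *: w), t] = 0.
  by move=> tu tw; rewrite formZl formDl formZl !(formC_sym _ t) tu tw mulr0 addr0 mulr0.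
have [cuw0|nz_cuw] := eqVneq (c + '[u, w]) 0.
  have uw : '[u, w] = - c by apply/eqP; rewrite -addr_eq0 addrC cuw0.
  have nz_2c : c + c != 0 by rewrite -mulr2n -mulr_natl mulf_neq0 ?two_neq0.
  exists ((beta / (c + c)) *: (u + (-1) *: w)); split; last exact: span.
    by rewrite formZr_idfun formDr formZr_idfun uc uw mulN1r opprK divfK.
  by right; rewrite formZr_idfun formDr formZr_idfun wc formC_sym uw mulN1r -opprD mulrN divfK.
exists ((beta / (c + '[u, w])) *: (u + 1 *: w)); split; last exact: span.
  by rewrite formZr_idfun formDr formZr_idfun mul1r uc divfK.
by left; rewrite formZr_idfun formDr formZr_idfun mul1r wc (formC_sym w u) [_ + c]addrC divfK.
Qed.

Section Semisimilarity.
Variables (s : {rmorphism F -> F}) (M : 'M[F]_n) (lam : F).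
Hypothesis sM : forall v, qform A (map_mx s v *m M) = lam * s (qform A v).

Lemma semisim_norm v : '[map_mx s v *m M] = lam * s '[v].
Proof. by rewrite -!qformE sM. Qed.

Lemma semisim_form u v : '[map_mx s u *m M, map_mx s v *m M] = lam * s '[u, v].
Proof.
have := semisim_norm (u + v); rewrite map_mxD mulmxDl !formD_sym !semisim_norm.
rewrite !rmorphD rmorphM rmorph_nat !mulrDr => /addrI.
by rewrite mulrCA => /(mulfI two_neq0).
Qed.

End Semisimilarity.

Lemma semilin_image_lineP (s : {rmorphism F -> F}) M u w :
  reflect (exists x, w = s x *: (map_mx s u *m M)) (w \in semilin_image s M (line u)).
Proof.
apply: (iffP imsetP) => [[_ /lineP [x ->] ->]|[x ->]].
  by exists x; rewrite map_mxZ scalemxAl.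
by exists (x *: u); [apply/lineP; exists x | rewrite map_mxZ scalemxAl].
Qed.

Lemma semisim_orth g (p1 p2 : point) u1 u2 w1 w2 : induced_by_semisim A g ->
  val p1 = line u1 -> val p2 = line u2 -> val (g p1) = line w1 -> val (g p2) = line w2 ->
  '[u1, u2] = 0 -> '[w1, w2] = 0.
Proof.
case=> s [M [lam [_ _ sM defg]]] def_p1 def_p2 def_gp1 def_gp2 u12.
have /semilin_image_lineP [x1 ->] : w1 \in semilin_image s M (line u1).
  by rewrite -def_p1 -defg def_gp1 line_id.
have /semilin_image_lineP [x2 ->] : w2 \in semilin_image s M (line u2).
  by rewrite -def_p2 -defg def_gp2 line_id.
by rewrite formZl formZr_idfun (semisim_form sM) u12 rmorph0 !mulr0.
Qed.

Lemma vec_neq0_of_norm u : '[u] != 0 -> u != 0.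
Proof. by apply: contraNneq => ->; rewrite form0l. Qed.

Lemma perp_notin_line v a : '[v] != 0 -> a != 0 -> '[a, v] = 0 -> a \notin line v.
Proof.
move=> nz_v nz_a av; apply/negP => /lineP [x ax]; move: av nz_a.
by rewrite ax formZl => /eqP; rewrite mulf_eq0 (negbTE nz_v) orbF => /eqP ->; rewrite scale0r eqxx.
Qed.

Lemma point_neqE (p q : point) u w : val p = line u -> val q = line w -> u != 0 ->
  (p != q) = (u \notin line w).
Proof.
move=> pu qw nz_u; apply/idP/idP => [pq|uw]; last first.
  by apply: contra uw => /eqP pq; rewrite -qw -pq pu line_id.
apply: contra pq => /lineP [x ux]; apply/eqP/val_inj; rewrite pu qw ux lineZ //.
by apply: contraNneq nz_u => x0; rewrite ux x0 scale0r.
Qed.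

Definition points_of_norm (c : F) : {set point} :=
  [set p | [exists u, [&& u != 0, val p == line u & '[u] == c]]].

Lemma points_of_normP (c : F) p :
  reflect (exists u, [/\ u != 0, val p = line u & '[u] = c]) (p \in points_of_norm c).
Proof.
rewrite inE; apply: (iffP existsP) => [[u /and3P [nz_u /eqP pu /eqP uc]]|[u [nz_u pu uc]]].
  by exists u.
by exists u; rewrite nz_u pu uc !eqxx.
Qed.

Lemma omega_mx_points_of_norm (c : F) M p :
  omega_mx M -> p \in points_of_norm c -> mxperm M p \in points_of_norm c.
Proof.
case=> unitM isoM _ /points_of_normP [u [nz_u pu uc]]; apply/points_of_normP.
by exists (u *m M); rewrite isoM (mxpermE unitM nz_u pu) unitmx_row_neq0.
Qed.

Section OrbitalGraphs.
Hypothesis n_ge5 : (5 <= n)%N.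
Variables (G : {group {perm point}}) (x0 : point) (v0 : 'rV[F]_n).
Hypotheses (OmegaG : (POmega A \subset G)%g)
           (semisimG : forall g, g \in G -> induced_by_semisim A g)
           (x0v0 : val x0 = line v0) (nz_v0 : '[v0] != 0).
Local Notation X := (orbit 'P G x0).

Let lt2n : (2 < n)%N. Proof. exact: leq_trans n_ge5. Qed.
Let lt3n : (3 < n)%N. Proof. exact: leq_trans n_ge5. Qed.
Let lt4n : (4 < n)%N. Proof. exact: n_ge5. Qed.

Lemma omega_mx_in_G M : omega_mx M -> mxperm M \in G.
Proof. by case=> _ _ /(subsetP OmegaG). Qed.

Lemma points_of_norm_sub_orbit : points_of_norm '[v0] \subset X.
Proof.
apply/subsetP => p /points_of_normP [u [nz_u pu uv0]].
have [M OmM v0M] := omega_trans lt2n nz_v0 (esym uv0); have [unitM _ _] := OmM.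
have -> : p = mxperm M x0.
  by apply: val_inj; rewrite (mxpermE unitM (vec_neq0_of_norm nz_v0) x0v0) v0M.
by rewrite -apermE mem_orbit // omega_mx_in_G.
Qed.

Lemma semisim_fix_points_of_norm g p : g \in G -> g x0 = x0 ->
  p \in points_of_norm '[v0] -> g p \in points_of_norm '[v0].
Proof.
move=> gG gx0 /points_of_normP [u [nz_u pu uv0]].
have [s [M [lam [unitM _ sM defg]]]] := semisimG gG.
have /semilin_image_lineP [x v0x] : v0 \in semilin_image s M (line v0).
  by rewrite -x0v0 -defg gx0 x0v0 line_id.
have [r nz_r gpr] := pointP (g p).
have /semilin_image_lineP [y ry] : r \in semilin_image s M (line u).
  by rewrite -pu -defg gpr line_id.
have nz_sx : s x != 0.
  by apply: contraNneq (vec_neq0_of_norm nz_v0) => sx0; rewrite v0x sx0 scale0r.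
have nz_sy : s y != 0 by apply: contraNneq nz_r => sy0; rewrite ry sy0 scale0r.
have nz_uM : map_mx s u *m M != 0 by rewrite unitmx_row_neq0 // map_mx_eq0.
apply/points_of_normP; exists (s x *: (map_mx s u *m M)); split.
- by rewrite scaler_eq0 negb_or nz_sx.
- by rewrite gpr ry !lineZ.
- by rewrite formZ_idfun (semisim_norm sM) uv0 -(semisim_norm sM) -formZ_idfun -v0x.
Qed.

Lemma omega_moves_x0 : exists2 M, omega_mx M & mxperm M x0 != x0.
Proof.
have [a av0 aa] := perp_represent '[v0] lt2n nz_v0.
have [M OmM v0M] := omega_trans lt2n nz_v0 (esym aa); have [unitM _ _] := OmM.
have nz_a : a != 0 by apply: vec_neq0_of_norm; rewrite aa.
exists M => //; rewrite (point_neqE _ x0v0 nz_a) ?perp_notin_line //.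
by rewrite (mxpermE unitM (vec_neq0_of_norm nz_v0) x0v0) v0M.
Qed.

Hypothesis primG : [primitive G, on X | 'P].

Lemma orbit_sub_points_of_norm : X \subset points_of_norm '[v0].
Proof.
apply: prim_orbit_sub primG _ _ _.
- by apply/points_of_normP; exists v0; rewrite vec_neq0_of_norm.
- by move=> g gG gx0 p; apply: semisim_fix_points_of_norm.
have [M OmM Mx0] := omega_moves_x0.
by exists (mxperm M); [apply: omega_mx_in_G | split=> // p; apply: omega_mx_points_of_norm].
Qed.

Lemma orbital_relC (x y p q : point) : orbital_rel G x y p q = orbital_rel G x y q p.
Proof.
apply: eq_existsb => g; rewrite orbC; congr (_ && (_ || _)); exact: andbC.
Qed.

Lemma orbital_edge (x y p z : point) v a u d :
  val x = line v -> val y = line a -> val p = line u -> val z = line d ->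
  '[v] = '[v0] -> '[a] = '[v0] -> '[u] = '[v0] -> '[d] = '[v0] -> x != y -> p != z ->
  '[u, d] = '[v, a] \/ '[u, d] = - '[v, a] -> orbital_rel G x y p z.
Proof.
move=> xv ya pu zd vv0 av0 uv0 dv0 xy pz uda.
have nz q : '[q] = '[v0] -> q != 0 by move=> qv0; apply: vec_neq0_of_norm; rewrite qv0.
rewrite eq_sym (point_neqE ya xv (nz a av0)) in xy.
rewrite eq_sym (point_neqE zd pu (nz d dv0)) in pz.
have [|||M OmM [vM aM]] := omega_map_pair lt4n _ _ _ uda xy pz; rewrite ?vv0 ?uv0 ?av0 ?dv0 //.
have [unitM _ _] := OmM.
apply/existsP; exists (mxperm M); rewrite omega_mx_in_G //=.
apply/orP; left; apply/andP; split; apply/eqP/val_inj.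
  by rewrite pu (mxpermE unitM (nz v vv0) xv) vM.
by rewrite zd (mxpermE unitM (nz a av0) ya) aM.
Qed.

Lemma orbital_diam_le2 x y : x \in X -> y \in X -> x != y ->
  graph_diam_le (orbital_rel G x y) X 2.
Proof.
move=> xX yX xy u w uX wX; have [<-|uw] := eqVneq u w; first by exists [::].
have rep q : q \in X -> exists q', [/\ q' != 0, val q = line q' & '[q'] = '[v0]].
  by move/(subsetP orbit_sub_points_of_norm)/points_of_normP.
have [[v [_ xv vv0]] [a [_ ya av0]]] := (rep x xX, rep y yX).
have [[u' [_ uu' u'v0]] [w' [_ ww' w'v0]]] := (rep u uX, rep w wX).
have [d [dv0 u'd w'd]] := exists_common_partner '[v, a] lt4n u'v0 w'v0 nz_v0.
have nz_d : d != 0 by apply: vec_neq0_of_norm; rewrite dv0.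
pose z := point_of nz_d; have zd : val z = line d by [].
have zX : z \in X by apply: (subsetP points_of_norm_sub_orbit); apply/points_of_normP; exists d.
have Euz : u != z -> orbital_rel G x y u z.
  by move=> uz; apply: (orbital_edge xv ya uu' zd) => //; left.
have Ewz : w != z -> orbital_rel G x y w z.
  by move=> wz; apply: (orbital_edge xv ya ww' zd).
have [zu|uz] := eqVneq z u.
  by exists [:: w]; split; rewrite //= ?wX // -zu orbital_relC Ewz // zu eq_sym.
have [zw|wz] := eqVneq z w.
  by exists [:: w]; split; rewrite //= ?wX // -zw Euz // eq_sym.
by exists [:: z; w]; split; rewrite //= ?zX ?wX // Euz 1?eq_sym // orbital_relC Ewz // eq_sym.
Qed.

Lemma orbital_rel_orth (x y p q : point) v a u d :
  val x = line v -> val y = line a -> val p = line u -> val q = line d ->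
  '[v, a] = 0 -> orbital_rel G x y p q -> '[u, d] = 0.
Proof.
move=> xv ya pu qd va /existsP [g /andP [gG /orP [] /andP [/eqP pg /eqP qg]]].
  by apply: (semisim_orth (semisimG gG) xv ya); rewrite -?pg -?qg.
by rewrite formC_sym; apply: (semisim_orth (semisimG gG) xv ya); rewrite -?pg -?qg.
Qed.

Lemma orbital_diam_gt1 :
  exists x y, [/\ x \in X, y \in X, x != y & ~ graph_diam_le (orbital_rel G x y) X 1].
Proof.
have [a av0 aa] := perp_represent '[v0] lt2n nz_v0.
have [t [tv0 nz_t t0]] := perp_isotropic lt3n nz_v0.
have v0t : '[v0 + t] = '[v0] by rewrite formD_orth ?t0 ?addr0 // formC_sym.
have v0_v0t : '[v0, v0 + t] = '[v0] by rewrite formDr (formC_sym v0 t) tv0 addr0.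
have nz_a : a != 0 by apply: vec_neq0_of_norm; rewrite aa.
have nz_v0t : v0 + t != 0 by apply: vec_neq0_of_norm; rewrite v0t.
pose y := point_of nz_a; pose w := point_of nz_v0t.
have [ya wv0t] : val y = line a /\ val w = line (v0 + t) by [].
have inX q (nz_q : q != 0) : '[q] = '[v0] -> point_of nz_q \in X.
  by move=> qv0; apply/(subsetP points_of_norm_sub_orbit)/points_of_normP; exists q.
have x0X : x0 \in X := orbit_refl _ _ _.
have wx0 : w != x0.
  rewrite (point_neqE wv0t x0v0 nz_v0t); apply: contra (perp_notin_line nz_v0 nz_t tv0).
  by case/lineP => x v0tx; apply/lineP; exists (x - 1); rewrite scalerBl scale1r -v0tx addrC addKr.
exists x0, y; split; rewrite ?inX //.
  have nz0 := vec_neq0_of_norm nz_v0.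
  by rewrite (point_neqE x0v0 ya nz0) perp_notin_line ?aa // formC_sym.
move=> /(_ x0 w x0X (inX _ _ v0t)) [[|z [|? ?]] [_ /= Ez last_s _]] //.
  by rewrite last_s eqxx in wx0.
move: Ez; rewrite andbT last_s => /(orbital_rel_orth x0v0 ya x0v0 wv0t).
by rewrite formC_sym av0 v0_v0t => /(_ erefl) /eqP; rewrite (negbTE nz_v0).
Qed.

End OrbitalGraphs.
End Nondegenerate.
End QuadraticSpace.

Theorem mainTheorem11 (F : finFieldType) (n : nat) (A : 'M[F]_n)
    (G : {group {perm point F n}}) (x0 : point F n) :
  odd #|F| -> (5 <= n)%N ->
  A^T = A -> \det A != 0 ->
  (POmega A \subset G)%g ->
  (forall g, g \in G -> induced_by_semisim A g) ->
  nondeg_point A x0 ->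
  [primitive G, on orbit 'P G x0 | 'P] ->
  orbital_diam_eq G (orbit 'P G x0) 2%N.
Proof.
move=> oddF n_ge5 symA detA OmegaG semisimG /existsP [v0 /and3P [_ /eqP x0v0 nz_v0]] primG.
rewrite qformE in nz_v0; split => [x y xX yX xy|].
  exact: (orbital_diam_le2 symA oddF detA n_ge5 OmegaG semisimG x0v0 nz_v0 primG).
exact: (orbital_diam_gt1 symA oddF detA n_ge5 OmegaG semisimG x0v0 nz_v0).
Qed.
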